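(* For real $z\ge 10$ let $$c_1(z)=\sum_{\substack{n_1,n_2,n_3,n_4\le z\\ \sqrt{n_1}+\sqrt{n_2}+\sqrt{n_3}=\sqrt{n_4}}}\frac{d(n_1)d(n_2)d(n_3)d(n_4)}{(n_1n_2n_3)^{3/4}n_4^{1/4}},$$ the sum being over positive integers. Then $c_1(z)\ll 1$ uniformly for $z\ge 10$.
   Context: $d(n)$ denotes the number of positive divisors of $n$. $f\ll g$ means $|f|\le Cg$ for some absolute positive constant $C$. *)

From Stdlib Require Import Reals List Arith ZArith.
Import ListNotations.
Open Scope R_scope.

(* d(n): number of positive divisors of n (d 0 = 0, irrelevant here). *)
Definition ndiv (n : nat) : nat :=
  length (filter (fun k => Nat.eqb (n mod k) 0) (seq 1 n)).

Definition rsum (l : list nat) (f : nat -> R) : R :=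
  fold_right (fun n acc => f n + acc) 0 l.

Definition upto (z : R) : list nat :=
  filter (fun n => if Rle_dec (INR n) z then true else false)
         (seq 1 (Z.to_nat (up z))).

Definition c1_term (n1 n2 n3 n4 : nat) : R :=
  if Req_EM_T (sqrt (INR n1) + sqrt (INR n2) + sqrt (INR n3)) (sqrt (INR n4))
  then INR (ndiv n1 * ndiv n2 * ndiv n3 * ndiv n4) /
       (Rpower (INR (n1 * n2 * n3)) (3/4) * Rpower (INR n4) (1/4))
  else 0.

Definition c1sum (z : R) : R :=
  rsum (upto z) (fun n1 => rsum (upto z) (fun n2 =>
  rsum (upto z) (fun n3 => rsum (upto z) (fun n4 => c1_term n1 n2 n3 n4)))).

(* Two arithmetic facts drive the proof.
   (1) Divisor bound: d(n)^8 <= C n.  Since d(prod p^e) = prod (e + 1) and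
       (e + 1)^8 <= p^e once p >= 2^8, only primes below 256 contribute to C.
   (2) Structure of the solutions: squaring the equation twice shows that
       n1 n2 and n1 n3 are squares of rationals, hence n_i = s m_i^2 for a
       common squarefree s (compare p-adic valuations), and then
       n4 = s (m1 + m2 + m3)^2.
   With (1) the summand at n_i = s m_i^2 is at most C^(1/2) (s m1 m2 m3)^(-5/4),
   so c1(z) <= C^(1/2) (sum_{m >= 1} m^(-5/4))^4 <= 5^4 C^(1/2), the series
   being bounded by telescoping. *)

From Stdlib Require Import Reals Lra Lia Psatz ZArith List.
From mathcomp Require ssreflect ssrfun ssrbool eqtype ssrnat seq path div bigop prime.
From mathcomp Require zify_ssreflect.

Module NumberTheory.
Import ssreflect ssrfun ssrbool eqtype ssrnat seq path div bigop prime zify_ssreflect.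
Local Open Scope nat_scope.

(* d(n) = prod (e + 1) over the prime factorisation n = prod p^e; mathcomp's
   divisors list is built one prime factor at a time by add_divisors. *)
Lemma size_add_divisors f divs :
  size (PrimeDecompAux.add_divisors f divs) = f.2.+1 * size divs.
Proof.
case: f => p e; rewrite /PrimeDecompAux.add_divisors /=.
elim: e => [|e IH] /=; first by rewrite mul1n.
by rewrite size_merge size_cat size_map IH mulSn addnC.
Qed.

Lemma size_divisors n : size (divisors n) = \prod_(f <- prime_decomp n) f.2.+1.
Proof.
rewrite /divisors; elim: (prime_decomp n) => [|f pd IH] /=; first by rewrite big_nil.
by rewrite size_add_divisors IH big_cons.
Qed.

Definition local_const (p : nat) : nat := if p < 256 then 8 ^ 8 else 1.

Lemma succ_pow8_le p e : prime p -> e.+1 ^ 8 <= local_const p * p ^ e.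
Proof.
move=> p_pr; have p_gt1 := prime_gt1 p_pr; rewrite /local_const.
case: ifP => [_ | /negbT p_big].
- (* writing e = 8k + r gives e + 1 <= 8 (k + 1) <= 8 * 2^k *)
  have le_e : e.+1 <= 8 * 2 ^ (e %/ 8).
    apply: (@leq_trans (8 * (e %/ 8).+1)); first by have := divn_eq e 8; have := ltn_mod e 8; lia.
    by rewrite leq_mul2l ltn_expl.
  have : e.+1 ^ 8 <= (8 * 2 ^ (e %/ 8)) ^ 8 by rewrite leq_exp2r.
  move/leq_trans; apply; rewrite expnMn leq_mul2l -expnM.
  apply/orP; right; apply: (leq_trans (leq_pexp2l _ (leq_divM e 8))) => //.
  by case: e {le_e} => [|e]; rewrite ?expn0 // leq_exp2r.
- rewrite mul1n; apply: (@leq_trans ((2 ^ e) ^ 8)); first by rewrite leq_exp2r // ltn_expl.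
  rewrite -expnM mulnC expnM; case: e => [|e]; first by rewrite !expn0.
  by rewrite leq_exp2r // leqNgt.
Qed.

Lemma prod_succ_pow8_le (s : seq (nat * nat)) : all (fun f => prime f.1) s ->
  (\prod_(f <- s) f.2.+1) ^ 8 <= \prod_(f <- s) local_const f.1 * \prod_(f <- s) f.1 ^ f.2.
Proof.
elim: s => [|f s IH] /=; first by rewrite !big_nil.
case/andP => f_pr s_pr; rewrite !big_cons expnMn.
apply: (leq_trans (leq_mul (succ_pow8_le f.1 f.2 f_pr) (IH s_pr))).
by rewrite -!mulnA (mulnCA (f.1 ^ f.2)).
Qed.

(* The constant C of the divisor bound: at most 256 primes have c_p > 1. *)
Definition divisor_const : nat := (8 ^ 8) ^ 256.

Lemma prod_local_const_le (s : seq (nat * nat)) : uniq (unzip1 s) ->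
  \prod_(f <- s) local_const f.1 <= divisor_const.
Proof.
have -> : \prod_(f <- s) local_const f.1 = (8 ^ 8) ^ count (fun f => f.1 < 256) s.
  elim: s => [|f s IH] /=; first by rewrite big_nil.
  by rewrite big_cons IH /local_const expnD; case: (f.1 < 256); rewrite ?mul1n.
move=> uniq_s; rewrite leq_pexp2l ?expn_gt0 // -(count_map fst (fun p => p < 256)).
rewrite -size_filter -(size_iota 0 256); apply: uniq_leq_size; first exact: filter_uniq.
by move=> p; rewrite mem_filter mem_iota => /andP [].
Qed.

Lemma divisors_pow8_le n : 0 < n -> size (divisors n) ^ 8 <= divisor_const * n.
Proof.
move=> n_gt0; rewrite size_divisors {2}(prod_prime_decomp n_gt0).
have all_pr : all (fun f => prime f.1) (prime_decomp n).
  by apply/allP => -[p e] /mem_prime_decomp [].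
apply: (leq_trans (prod_succ_pow8_le _ all_pr)); rewrite leq_mul2r.
by rewrite prod_local_const_le ?orbT // primes_uniq.
Qed.

Lemma eqb_mod_dvdn n k : Nat.eqb (n mod k) 0 = (k %| n).
Proof.
apply/idP/idP => [/Nat.eqb_spec/Nat.Lcm0.mod_divide [c ->] | /dvdnP [c n_eq]].
  exact: dvdn_mull.
by apply/Nat.eqb_spec/Nat.Lcm0.mod_divide; exists c.
Qed.

Lemma ndiv_divisors n : 0 < n -> ndiv n = size (divisors n).
Proof.
move=> n_gt0; have -> : ndiv n = count (dvdn^~ n) (iota 1 n).
  rewrite /ndiv -[List.seq 1 n]/(iota 1 n); elim: (iota 1 n) => //= k l IHl.
  by rewrite eqb_mod_dvdn; case: (k %| n); rewrite /= IHl.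
rewrite -size_filter; apply/perm_size/uniq_perm.
- exact/filter_uniq/iota_uniq.
- exact: divisors_uniq.
move=> d; rewrite mem_filter mem_iota -dvdn_divisors //.
case d_dvd: (d %| n) => //=.
by rewrite add1n ltnS (dvdn_gt0 n_gt0 d_dvd) (dvdn_leq n_gt0 d_dvd).
Qed.

Lemma nat_pow_expn m e : Nat.pow m e = m ^ e.
Proof. by elim: e => //= e ->; rewrite expnS. Qed.

Lemma ndiv_pos n : (0 < n)%coq_nat -> (0 < ndiv n)%coq_nat.
Proof.
move=> /ltP n_gt0; apply/ltP; rewrite ndiv_divisors //.
by case: (divisors n) (divisor1 n).
Qed.

Lemma ndiv_pow8_le n :
  (0 < n)%coq_nat -> (Nat.pow (ndiv n) 8 <= Nat.mul divisor_const n)%coq_nat.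
Proof.
move=> /ltP n_gt0; apply/leP; rewrite nat_pow_expn ndiv_divisors // multE.
exact: divisors_pow8_le.
Qed.

Definition squarefree (s : nat) : Prop := forall p, logn p s <= 1.

Lemma squarefree_decomp x : 0 < x ->
  exists s t, [/\ x = s * (t * t), 0 < t & squarefree s].
Proof.
elim/ltn_ind: x => x IH x_gt0.
have [x_le1 | x_gt1] := leqP x 1.
  by exists 1, 1; split=> // [|p]; [lia | rewrite logn1].
pose p := pdiv x; have p_pr : prime p by exact: pdiv_prime.
have p_gt1 := prime_gt1 p_pr.
have x_eq : x = p * (x %/ p) by rewrite mulnC divnK // pdiv_dvd.
have y_gt0 : 0 < x %/ p by rewrite divn_gt0 ?(ltnW p_gt1) // pdiv_leq.
have [|s [t [y_eq t_gt0 s_sqf]]] := IH (x %/ p) _ y_gt0.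
  by rewrite ltn_Pdiv.
have s_gt0 : 0 < s by move: y_gt0; rewrite y_eq muln_gt0 => /andP [].
case p_dvd: (p %| s).
- exists (s %/ p), (p * t); split.
  + by rewrite x_eq y_eq -{1}(divnK p_dvd); lia.
  + by rewrite muln_gt0 t_gt0 ltnW.
  move=> q; apply: leq_trans (s_sqf q); exact: dvdn_leq_log s_gt0 (dvdn_div p_dvd).
- exists (p * s), t; split=> //; first by rewrite x_eq y_eq; lia.
  move=> q; rewrite lognM ?(ltnW p_gt1) // logn_prime //.
  case: eqP => [-> | _]; last exact: s_sqf.
  by rewrite logn_coprime // prime_coprime // p_dvd.
Qed.

(* If s s' k^2 is a perfect square with s, s' squarefree then s = s':
   compare p-adic valuations, which are at most 1 for s and s'. *)
Lemma squarefree_square_eq s s' k m : 0 < s -> 0 < s' -> 0 < k ->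
  squarefree s -> squarefree s' -> s * s' * (k * k) = m * m -> s = s'.
Proof.
move=> s_gt0 s'_gt0 k_gt0 s_sqf s'_sqf sq_eq.
have : 0 < m * m by rewrite -sq_eq !muln_gt0 s_gt0 s'_gt0 k_gt0.
rewrite muln_gt0 andbb => m_gt0.
apply: eqn_from_log => // p; have := congr1 (logn p) sq_eq.
rewrite !lognM ?muln_gt0 ?s_gt0 ?s'_gt0 ?k_gt0 //.
by have := s_sqf p; have := s'_sqf p; lia.
Qed.

Lemma common_square_class a b c qb pb qc pc :
  (0 < a)%coq_nat -> (0 < b)%coq_nat -> (0 < c)%coq_nat ->
  (0 < qb)%coq_nat -> Nat.mul (Nat.mul a b) (Nat.mul qb qb) = Nat.mul pb pb ->
  (0 < qc)%coq_nat -> Nat.mul (Nat.mul a c) (Nat.mul qc qc) = Nat.mul pc pc ->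
  exists s m1 m2 m3, a = Nat.mul s (Nat.mul m1 m1) /\ b = Nat.mul s (Nat.mul m2 m2) /\
    c = Nat.mul s (Nat.mul m3 m3) /\
    (0 < s)%coq_nat /\ (0 < m1)%coq_nat /\ (0 < m2)%coq_nat /\ (0 < m3)%coq_nat.
Proof.
move=> /ltP a_gt0 /ltP b_gt0 /ltP c_gt0 /ltP qb_gt0 ab_sq /ltP qc_gt0 ac_sq.
have [sa [m1 [a_eq m1_gt0 sa_sqf]]] := squarefree_decomp _ a_gt0.
have [sb [m2 [b_eq m2_gt0 sb_sqf]]] := squarefree_decomp _ b_gt0.
have [sc [m3 [c_eq m3_gt0 sc_sqf]]] := squarefree_decomp _ c_gt0.
have sqf_gt0 x s t : 0 < x -> x = s * (t * t) -> 0 < s.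
  by move=> + x_eq; rewrite x_eq !muln_gt0 => /andP [].
have sa_gt0 := sqf_gt0 _ _ _ a_gt0 a_eq.
have sb_gt0 := sqf_gt0 _ _ _ b_gt0 b_eq.
have sc_gt0 := sqf_gt0 _ _ _ c_gt0 c_eq.
have sb_eq : sa = sb.
  apply: (@squarefree_square_eq sa sb (m1 * m2 * qb) pb) => //.
    by rewrite !muln_gt0 m1_gt0 m2_gt0 qb_gt0.
  by move: ab_sq; rewrite a_eq b_eq; lia.
have sc_eq : sa = sc.
  apply: (@squarefree_square_eq sa sc (m1 * m3 * qc) pc) => //.
    by rewrite !muln_gt0 m1_gt0 m3_gt0 qc_gt0.
  by move: ac_sq; rewrite a_eq c_eq; lia.
exists sa, m1, m2, m3; rewrite -sb_eq in b_eq; rewrite -sc_eq in c_eq.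
by do !split => //; apply/ltP.
Qed.
End NumberTheory.

Import ListNotations.
Open Scope R_scope.

Definition lsum {A : Type} (l : list A) (f : A -> R) : R :=
  fold_right (fun x acc => f x + acc) 0 l.

Lemma lsum_app {A : Type} (l1 l2 : list A) f : lsum (l1 ++ l2) f = lsum l1 f + lsum l2 f.
Proof. induction l1 as [|a l1 IH]; simpl; [ring | rewrite IH; ring]. Qed.

Lemma lsum_map {A B : Type} (g : B -> A) l f : lsum (map g l) f = lsum l (fun x => f (g x)).
Proof. induction l as [|b l IH]; simpl; [ring | rewrite IH; ring]. Qed.

Lemma lsum_ext {A : Type} (l : list A) f g :
  (forall x, In x l -> f x = g x) -> lsum l f = lsum l g.
Proof.
  induction l as [|a l IH]; simpl; intros Hfg; [reflexivity|].
  rewrite Hfg, IH by auto; reflexivity.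
Qed.

Lemma lsum_le {A : Type} (l : list A) f g :
  (forall x, In x l -> f x <= g x) -> lsum l f <= lsum l g.
Proof.
  induction l as [|a l IH]; simpl; intros Hfg; [lra|].
  apply Rplus_le_compat; auto.
Qed.

Lemma lsum_zero {A : Type} (l : list A) : lsum l (fun _ => 0) = 0.
Proof. induction l as [|a l IH]; simpl; [reflexivity | rewrite IH; ring]. Qed.

Lemma lsum_nonneg {A : Type} (l : list A) f : (forall x, In x l -> 0 <= f x) -> 0 <= lsum l f.
Proof. intros Hf; rewrite <- (lsum_zero l); apply lsum_le; exact Hf. Qed.

Lemma lsum_plus {A : Type} (l : list A) f g : lsum l (fun x => f x + g x) = lsum l f + lsum l g.
Proof. induction l as [|a l IH]; simpl; [ring | rewrite IH; ring]. Qed.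

Lemma lsum_scal {A : Type} (l : list A) c f : lsum l (fun x => c * f x) = c * lsum l f.
Proof. induction l as [|a l IH]; simpl; [ring | rewrite IH; ring]. Qed.

Lemma lsum_term_le {A : Type} (l : list A) f x :
  In x l -> (forall y, In y l -> 0 <= f y) -> f x <= lsum l f.
Proof.
  induction l as [|a l IH]; simpl; intros Hx Hf; [contradiction|].
  assert (0 <= f a) by auto.
  assert (0 <= lsum l f) by (apply lsum_nonneg; auto).
  destruct Hx as [<- | Hx]; [lra|].
  assert (f x <= lsum l f) by auto; lra.
Qed.

Lemma lsum_comm {A B : Type} (l1 : list A) (l2 : list B) (F : A -> B -> R) :
  lsum l1 (fun a => lsum l2 (F a)) = lsum l2 (fun b => lsum l1 (fun a => F a b)).
Proof.
  induction l1 as [|a l1 IH]; simpl.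
  - symmetry; apply lsum_zero.
  - rewrite IH, <- lsum_plus; reflexivity.
Qed.

Lemma lsum_list_prod {A B : Type} (l1 : list A) (l2 : list B) (F : A -> B -> R) :
  lsum (list_prod l1 l2) (fun '(a, b) => F a b) = lsum l1 (fun a => lsum l2 (F a)).
Proof.
  induction l1 as [|a l1 IH]; simpl; [reflexivity|].
  rewrite lsum_app, lsum_map, IH; reflexivity.
Qed.

Lemma NoDup_list_prod {A B : Type} (l1 : list A) (l2 : list B) :
  NoDup l1 -> NoDup l2 -> NoDup (list_prod l1 l2).
Proof.
  intros H1 H2; induction H1 as [|a l1 Ha Hl1 IH]; simpl; [constructor|].
  apply NoDup_app; [ | exact IH | ].
  - apply NoDup_map_NoDup_ForallPairs; [intros x y _ _ E; injection E; auto | exact H2].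
  - intros [x y] Hx Hy; apply in_map_iff in Hx; destruct Hx as [y' [E _]].
    injection E as <- <-; apply in_prod_iff in Hy; tauto.
Qed.

Lemma lsum_indicator_le {A : Type} (eq_dec : forall x y : A, {x = y} + {x <> y})
  (l : list A) x : NoDup l -> lsum l (fun a => if eq_dec x a then 1 else 0) <= 1.
Proof.
  induction 1 as [|a l Ha Hl IH]; simpl; [lra|].
  destruct (eq_dec x a) as [<-|_]; [|lra].
  rewrite (lsum_ext l _ (fun _ => 0)), lsum_zero; [lra|].
  intros y Hy; destruct (eq_dec x y) as [<-|_]; [contradiction | reflexivity].
Qed.

(* Since l1 has no duplicates, distinct a use
   distinct b, hence sum_l1 F <= sum_l2 g. *)
Lemma lsum_le_pullback {A B : Type} (eq_dec : forall x y : A, {x = y} + {x <> y})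
  (l1 : list A) (l2 : list B) (F : A -> R) (g : B -> R) (psi : B -> A) :
  NoDup l1 -> (forall a, 0 <= F a) ->
  (forall a, In a l1 -> F a <> 0 -> exists b, In b l2 /\ psi b = a) ->
  (forall b, In b l2 -> F (psi b) <= g b) ->
  lsum l1 F <= lsum l2 g.
Proof.
  intros Hnd HF Hcover Hg.
  set (ind := fun a b => if eq_dec (psi b) a then 1 else 0).
  assert (ind_nonneg : forall a b, 0 <= ind a b) by (intros; unfold ind; destruct eq_dec; lra).
  apply Rle_trans with (lsum l1 (fun a => lsum l2 (fun b => ind a b * F (psi b)))).
  - apply lsum_le; intros a Ha.
    destruct (Req_dec (F a) 0) as [Hzero|Hnz].
    + rewrite Hzero; apply lsum_nonneg; intros b _; apply Rmult_le_pos; auto.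
    + destruct (Hcover a Ha Hnz) as [b [Hb <-]].
      replace (F (psi b)) with (ind (psi b) b * F (psi b)) at 1
        by (unfold ind; destruct eq_dec; [ring | congruence]).
      apply (lsum_term_le l2 (fun b' => ind (psi b) b' * F (psi b'))); [exact Hb|].
      intros; apply Rmult_le_pos; auto.
  - rewrite lsum_comm; apply lsum_le; intros b Hb.
    rewrite (lsum_ext l1 _ (fun a => F (psi b) * ind a b)) by (intros; ring).
    rewrite lsum_scal.
    assert (lsum l1 (fun a => ind a b) <= 1) by (apply lsum_indicator_le; exact Hnd).
    assert (F (psi b) <= g b) by auto.
    pose proof (HF (psi b)); nra.
Qed.

(* For positive s and r with r^4 = s^4 + 1 (i.e. s = x^(1/4), r = (x+1)^(1/4)):
   r^(-5) <= 4 (s^(-1) - r^(-1)). *)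
Lemma quartic_root_gap r s : 0 < s -> 0 < r -> r ^ 4 = s ^ 4 + 1 ->
  / (r ^ 4 * r) <= 4 / s - 4 / r.
Proof.
  intros Hs Hr Hrs.
  assert (Hsr : s < r).
  { destruct (Rlt_or_le s r) as [H|H]; [exact H|].
    assert (r ^ 4 <= s ^ 4) by (apply pow_incr; nra). lra. }
  (* 1 = r^4 - s^4 = (r - s)(r^3 + r^2 s + r s^2 + s^3) <= 4 (r - s) r^3 *)
  assert (Hgap : 1 <= 4 * (r - s) * r ^ 3).
  { assert (s ^ 2 <= r ^ 2) by (apply pow_incr; lra).
    assert (s ^ 3 <= r ^ 3) by (apply pow_incr; lra).
    assert (r ^ 2 * s <= r ^ 3)
      by (replace (r ^ 3) with (r ^ 2 * r) by ring; apply Rmult_le_compat_l; nra).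
    assert (r * s ^ 2 <= r ^ 3)
      by (replace (r ^ 3) with (r * r ^ 2) by ring; apply Rmult_le_compat_l; lra).
    assert (1 = (r - s) * (r ^ 3 + r ^ 2 * s + r * s ^ 2 + s ^ 3))
      by (replace ((r - s) * _) with (r ^ 4 - s ^ 4) by ring; lra).
    nra. }
  assert (E : 4 / s - 4 / r - / (r ^ 4 * r) = (4 * (r - s) * r ^ 4 - s) / (r ^ 5 * s))
    by (field; lra).
  assert (0 <= (4 * (r - s) * r ^ 4 - s) / (r ^ 5 * s)).
  { apply Rmult_le_pos; [nra|].
    left; apply Rinv_0_lt_compat, Rmult_lt_0_compat; [apply pow_lt|]; lra. }
  lra.
Qed.

Lemma Rpower_quarter_pow4 x : 0 < x -> Rpower x (1 / 4) ^ 4 = x.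
Proof.
  intros Hx; rewrite <- Rpower_pow by apply exp_pos.
  rewrite Rpower_mult; replace (1 / 4 * INR 4) with 1 by (simpl; field).
  apply Rpower_1; exact Hx.
Qed.

Definition weight (m : nat) : R := Rpower (INR m) (- (5 / 4)).

Lemma weight_telescope x : 1 <= x ->
  Rpower (x + 1) (- (5 / 4)) <= 4 / Rpower x (1 / 4) - 4 / Rpower (x + 1) (1 / 4).
Proof.
  intros Hx.
  rewrite Rpower_Ropp; replace (5 / 4) with (1 + 1 / 4) by field.
  rewrite Rpower_plus, Rpower_1 by lra.
  rewrite <- (Rpower_quarter_pow4 (x + 1)) at 1 by lra.
  apply quartic_root_gap; try apply exp_pos.
  rewrite !Rpower_quarter_pow4 by lra; reflexivity.
Qed.

Lemma weight_partial_sum N :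
  lsum (seq 1 (S N)) weight <= 5 - 4 / Rpower (INR (S N)) (1 / 4).
Proof.
  induction N as [|N IH].
  - simpl; unfold weight, Rpower; change (INR 1) with 1; rewrite ln_1, !Rmult_0_r, exp_0; lra.
  - rewrite seq_S, lsum_app; simpl (lsum [_] _).
    replace (1 + S N)%nat with (S (S N)) by lia.
    unfold weight at 2; rewrite (S_INR (S N)).
    assert (HN : 1 <= INR (S N)) by (apply (le_INR 1); lia).
    pose proof (weight_telescope (INR (S N)) HN); lra.
Qed.

Lemma weight_sum_le N : lsum (seq 1 N) weight <= 5.
Proof.
  destruct N as [|N]; [simpl; lra|].
  pose proof (weight_partial_sum N).
  assert (0 < 4 / Rpower (INR (S N)) (1 / 4)) by (apply Rdiv_lt_0_compat; [lra | apply exp_pos]).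
  lra.
Qed.

Definition quads (l : list nat) : list (nat * nat * nat * nat) :=
  list_prod (list_prod (list_prod l l) l) l.

Lemma NoDup_quads l : NoDup l -> NoDup (quads l).
Proof. intros Hl; unfold quads; repeat apply NoDup_list_prod; exact Hl. Qed.

Lemma lsum_quads (l : list nat) (T : nat -> nat -> nat -> nat -> R) :
  lsum (quads l) (fun '(a, b, c, d) => T a b c d) =
  lsum l (fun a => lsum l (fun b => lsum l (fun c => lsum l (T a b c)))).
Proof.
  unfold quads.
  rewrite (lsum_list_prod _ l (fun t d => let '(a, b, c) := t in T a b c d)).
  rewrite (lsum_ext _ _ (fun '(p, c) => let '(a, b) := p in lsum l (T a b c)))
    by (intros [[a b] c] _; reflexivity).
  rewrite (lsum_list_prod _ l (fun p c => let '(a, b) := p in lsum l (T a b c))).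
  rewrite (lsum_ext _ _ (fun '(a, b) => lsum l (fun c => lsum l (T a b c))))
    by (intros [a b] _; reflexivity).
  apply lsum_list_prod.
Qed.

Lemma lsum_quads_mul (l : list nat) (f : nat -> R) :
  lsum (quads l) (fun '(a, b, c, d) => f a * f b * f c * f d) = lsum l f ^ 4.
Proof.
  rewrite lsum_quads.
  rewrite (lsum_ext l _ (fun a => lsum l f ^ 3 * f a)); [rewrite lsum_scal; ring|].
  intros a _.
  rewrite (lsum_ext l _ (fun b => f a * lsum l f ^ 2 * f b)); [rewrite lsum_scal; ring|].
  intros b _.
  rewrite (lsum_ext l _ (fun c => f a * f b * lsum l f * f c)); [rewrite lsum_scal; ring|].
  intros c _.
  rewrite lsum_scal; ring.
Qed.

Lemma exp_le_mono x y : x <= y -> exp x <= exp y.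
Proof. intros [H | ->]; [left; apply exp_increasing; exact H | right; reflexivity]. Qed.

Lemma ln_le_mono x y : 0 < x -> x <= y -> ln x <= ln y.
Proof. intros Hx [H | ->]; [left; apply ln_increasing; auto | right; reflexivity]. Qed.

Lemma INR_pos n : (0 < n)%nat -> 0 < INR n.
Proof. intros; apply lt_0_INR; lia. Qed.

Lemma ln_INR_nonneg n : (0 < n)%nat -> 0 <= ln (INR n).
Proof. intros Hn; rewrite <- ln_1; apply ln_le_mono; [lra | apply (le_INR 1); lia]. Qed.

Lemma ln_INR_mult a b : (0 < a)%nat -> (0 < b)%nat ->
  ln (INR (a * b)) = ln (INR a) + ln (INR b).
Proof. intros; rewrite mult_INR; apply ln_mult; apply INR_pos; auto. Qed.

Lemma c1_term_le_exp n1 n2 n3 n4 :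
  (0 < n1)%nat -> (0 < n2)%nat -> (0 < n3)%nat -> (0 < n4)%nat ->
  c1_term n1 n2 n3 n4 <=
  exp (ln (INR (ndiv n1)) + ln (INR (ndiv n2)) + ln (INR (ndiv n3)) + ln (INR (ndiv n4))
       - 3 / 4 * (ln (INR n1) + ln (INR n2) + ln (INR n3)) - 1 / 4 * ln (INR n4)).
Proof.
  intros H1 H2 H3 H4; unfold c1_term.
  destruct Req_EM_T as [_|_]; [|left; apply exp_pos].
  assert (Hd : forall n, (0 < n)%nat -> 0 < INR (ndiv n))
    by (intros n Hn; apply INR_pos, NumberTheory.ndiv_pos, Hn).
  right; unfold Rminus; rewrite !exp_plus, !exp_Ropp, !exp_ln by auto.
  unfold Rpower; rewrite !mult_INR, !ln_mult
    by (repeat apply Rmult_lt_0_compat; auto using INR_pos).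
  field; split; apply Rgt_not_eq, exp_pos.
Qed.

Lemma sqrt_sum_squared a b c d :
  sqrt (INR a) + sqrt (INR b) + sqrt (INR c) = sqrt (INR d) ->
  2 * sqrt (INR (a * b)) + 2 * sqrt (INR (c * d)) = INR d + INR c - INR a - INR b.
Proof.
  intros E; rewrite !mult_INR, !sqrt_mult by apply pos_INR.
  pose proof (sqrt_sqrt (INR a) (pos_INR a)); pose proof (sqrt_sqrt (INR b) (pos_INR b)).
  pose proof (sqrt_sqrt (INR c) (pos_INR c)); pose proof (sqrt_sqrt (INR d) (pos_INR d)).
  set (A := sqrt (INR a)) in *; set (B := sqrt (INR b)) in *.
  set (C := sqrt (INR c)) in *; set (D := sqrt (INR d)) in *.
  nra.
Qed.

(* If 2 sqrt X + 2 sqrt Y = k is an integer and X > 0, then sqrt X is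
   rational: eliminating sqrt Y gives 4 k sqrt X = k^2 + 4X - 4Y. *)
Lemma sqrt_rational X Y (k : Z) : (0 < X)%nat ->
  2 * sqrt (INR X) + 2 * sqrt (INR Y) = IZR k ->
  exists q p : nat, (0 < q)%nat /\ (X * (q * q) = p * p)%nat.
Proof.
  intros HX E.
  set (u := sqrt (INR X)) in *; set (v := sqrt (INR Y)) in *.
  assert (Hu : 0 < u) by (apply sqrt_lt_R0, INR_pos, HX).
  assert (Hv : 0 <= v) by apply sqrt_pos.
  assert (Hu2 : u * u = INR X) by (apply sqrt_sqrt, pos_INR).
  assert (Hv2 : v * v = INR Y) by (apply sqrt_sqrt, pos_INR).
  assert (Hk : (0 < k)%Z) by (apply lt_IZR; lra).
  set (T := (k * k + 4 * Z.of_nat X - 4 * Z.of_nat Y)%Z).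
  assert (HT : IZR T = 4 * IZR k * u).
  { unfold T; rewrite minus_IZR, plus_IZR, !mult_IZR, <- !INR_IZR_INZ, <- Hu2, <- Hv2.
    replace v with (IZR k / 2 - u) by lra; field. }
  assert (HT0 : (0 <= T)%Z).
  { apply le_IZR; rewrite HT; apply IZR_lt in Hk; nra. }
  exists (Z.to_nat (4 * k)), (Z.to_nat T); split; [lia|].
  apply Nat2Z.inj; rewrite !Nat2Z.inj_mul, !Z2Nat.id by lia.
  apply eq_IZR; rewrite !mult_IZR, <- INR_IZR_INZ, HT, <- Hu2; ring.
Qed.

Lemma sqrt_sum_product_square a b c d : (0 < a)%nat -> (0 < b)%nat ->
  sqrt (INR a) + sqrt (INR b) + sqrt (INR c) = sqrt (INR d) ->
  exists q p : nat, (0 < q)%nat /\ (a * b * (q * q) = p * p)%nat.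
Proof.
  intros Ha Hb E.
  apply (sqrt_rational (a * b) (c * d) (Z.of_nat d + Z.of_nat c - Z.of_nat a - Z.of_nat b)).
  - lia.
  - rewrite (sqrt_sum_squared a b c d E), !minus_IZR, !plus_IZR, <- !INR_IZR_INZ; reflexivity.
Qed.

Lemma sqrt_INR_scaled_square s m : sqrt (INR (s * (m * m))) = sqrt (INR s) * INR m.
Proof.
  rewrite !mult_INR, sqrt_mult, sqrt_square by auto using pos_INR, Rmult_le_pos.
  reflexivity.
Qed.

Definition solution (t : nat * nat * nat * nat) : nat * nat * nat * nat :=
  let '(s, m1, m2, m3) := t in
  (s * (m1 * m1), s * (m2 * m2), s * (m3 * m3), s * ((m1 + m2 + m3) * (m1 + m2 + m3)))%nat.

Lemma sqrt_sum_solution n1 n2 n3 n4 : (0 < n1)%nat -> (0 < n2)%nat -> (0 < n3)%nat ->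
  sqrt (INR n1) + sqrt (INR n2) + sqrt (INR n3) = sqrt (INR n4) ->
  exists s m1 m2 m3, (0 < s)%nat /\ (0 < m1)%nat /\ (0 < m2)%nat /\ (0 < m3)%nat /\
    solution (s, m1, m2, m3) = (n1, n2, n3, n4).
Proof.
  intros H1 H2 H3 E.
  destruct (sqrt_sum_product_square n1 n2 n3 n4 H1 H2 E) as [q12 [p12 [Hq12 E12]]].
  assert (E' : sqrt (INR n1) + sqrt (INR n3) + sqrt (INR n2) = sqrt (INR n4)) by lra.
  destruct (sqrt_sum_product_square n1 n3 n2 n4 H1 H3 E') as [q13 [p13 [Hq13 E13]]].
  destruct (NumberTheory.common_square_class n1 n2 n3 q12 p12 q13 p13 H1 H2 H3 Hq12 E12 Hq13 E13)
    as [s [m1 [m2 [m3 [-> [-> [-> [Hs [Hm1 [Hm2 Hm3]]]]]]]]]].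
  exists s, m1, m2, m3; do 4 (split; [assumption|]); simpl.
  do 3 f_equal; apply INR_eq.
  assert (Hn4 : sqrt (INR n4) = sqrt (INR s) * INR (m1 + m2 + m3))
    by (rewrite <- E, !sqrt_INR_scaled_square, !plus_INR; ring).
  rewrite <- (sqrt_sqrt (INR n4)), Hn4 by apply pos_INR.
  rewrite !mult_INR, <- (sqrt_sqrt (INR s)) at 1 by apply pos_INR; ring.
Qed.

Lemma c1_term_nonneg n1 n2 n3 n4 : 0 <= c1_term n1 n2 n3 n4.
Proof.
  unfold c1_term; destruct Req_EM_T; [|lra].
  apply Rmult_le_pos; [apply pos_INR|].
  left; apply Rinv_0_lt_compat, Rmult_lt_0_compat; apply exp_pos.
Qed.

Lemma c1_term_support n1 n2 n3 n4 : c1_term n1 n2 n3 n4 <> 0 ->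
  sqrt (INR n1) + sqrt (INR n2) + sqrt (INR n3) = sqrt (INR n4).
Proof. unfold c1_term; destruct Req_EM_T as [E|_]; [auto | contradiction]. Qed.

Lemma c1sum_nonneg z : 0 <= c1sum z.
Proof. unfold c1sum, rsum; repeat (apply lsum_nonneg; intros); apply c1_term_nonneg. Qed.

Lemma quad_eq_dec (x y : nat * nat * nat * nat) : {x = y} + {x <> y}.
Proof. repeat decide equality. Qed.

Lemma c1_support_parametrised N n1 n2 n3 n4 :
  In n1 (seq 1 N) -> In n2 (seq 1 N) -> In n3 (seq 1 N) -> c1_term n1 n2 n3 n4 <> 0 ->
  exists b, In b (quads (seq 1 N)) /\ solution b = (n1, n2, n3, n4).
Proof.
  rewrite !in_seq; intros H1 H2 H3 Hnz.
  destruct (sqrt_sum_solution n1 n2 n3 n4 ltac:(lia) ltac:(lia) ltac:(lia)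
              (c1_term_support _ _ _ _ Hnz))
    as [s [m1 [m2 [m3 [Hs [Hm1 [Hm2 [Hm3 Hsol]]]]]]]].
  exists (s, m1, m2, m3); split; [|exact Hsol].
  injection Hsol as E1 E2 E3 _.
  assert (Hle : forall m, (0 < m)%nat -> (s <= s * (m * m) /\ m <= s * (m * m))%nat)
    by (intros m Hm; assert (1 <= m * m)%nat by nia; split; nia).
  pose proof (Hle m1 Hm1); pose proof (Hle m2 Hm2); pose proof (Hle m3 Hm3).
  unfold quads; rewrite !in_prod_iff, !in_seq; lia.
Qed.

Section UniformBound.

Variable K : nat.
Hypothesis ndiv_pow8_bound : forall n, (0 < n)%nat -> (Nat.pow (ndiv n) 8 <= K * n)%nat.

Lemma ln_ndiv_le n : (0 < n)%nat -> ln (INR (ndiv n)) <= (ln (INR K) + ln (INR n)) / 8.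
Proof.
  intros Hn.
  pose proof (INR_pos _ (NumberTheory.ndiv_pos n Hn)) as Hd.
  assert (Hle : INR (ndiv n) ^ 8 <= INR K * INR n)
    by (rewrite <- pow_INR, <- mult_INR; apply le_INR, ndiv_pow8_bound, Hn).
  assert (HK : 0 < INR K).
  { apply (Rmult_lt_reg_r (INR n)); [apply INR_pos, Hn|].
    pose proof (pow_lt _ 8 Hd); lra. }
  apply ln_le_mono in Hle; [|apply pow_lt, Hd].
  rewrite ln_pow, ln_mult in Hle by auto using INR_pos.
  replace (INR 8) with 8 in Hle by (simpl; ring); lra.
Qed.

Lemma c1_term_scaled_squares_le s m1 m2 m3 n4 :
  (0 < s)%nat -> (0 < m1)%nat -> (0 < m2)%nat -> (0 < m3)%nat -> (0 < n4)%nat ->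
  c1_term (s * (m1 * m1)) (s * (m2 * m2)) (s * (m3 * m3)) n4 <=
  Rpower (INR K) (1 / 2) * (weight s * weight m1 * weight m2 * weight m3).
Proof.
  intros Hs H1 H2 H3 H4.
  assert (Hpos : forall m, (0 < m)%nat -> (0 < s * (m * m))%nat) by (intros; nia).
  eapply Rle_trans; [apply c1_term_le_exp; auto|].
  assert (Hln : forall m, (0 < m)%nat -> ln (INR (s * (m * m))) = ln (INR s) + 2 * ln (INR m))
    by (intros m Hm; rewrite !ln_INR_mult by nia; ring).
  pose proof (ln_ndiv_le _ (Hpos m1 H1)); pose proof (ln_ndiv_le _ (Hpos m2 H2)).
  pose proof (ln_ndiv_le _ (Hpos m3 H3)); pose proof (ln_ndiv_le _ H4).
  rewrite !Hln in * by assumption.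
  pose proof (ln_INR_nonneg s Hs); pose proof (ln_INR_nonneg n4 H4).
  unfold weight, Rpower; rewrite <- !exp_plus; apply exp_le_mono; lra.
Qed.

(* Compare c1sum, a sum over quadruples (n_i) <= z, with the sum over the
   parameters (s, m_i) <= z of the bound above, which factorises. *)
Lemma c1sum_le z : c1sum z <= Rpower (INR K) (1 / 2) * 5 ^ 4.
Proof.
  set (S := seq 1 (Z.to_nat (up z))).
  assert (HS : forall n, In n (upto z) -> In n S)
    by (intros n Hn; apply filter_In in Hn; tauto).
  unfold c1sum; change rsum with (@lsum nat); rewrite <- lsum_quads.
  apply Rle_trans with (lsum (quads S) (fun '(s, m1, m2, m3) =>
    Rpower (INR K) (1 / 2) * (weight s * weight m1 * weight m2 * weight m3))).
  - apply (lsum_le_pullback quad_eq_dec _ _ _ _ solution).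
    + apply NoDup_quads, NoDup_filter, seq_NoDup.
    + intros [[[n1 n2] n3] n4]; apply c1_term_nonneg.
    + intros [[[n1 n2] n3] n4] Hin Hnz; unfold quads in Hin.
      rewrite !in_prod_iff in Hin; destruct Hin as [[[H1 H2] H3] _].
      apply c1_support_parametrised; auto.
    + intros [[[s m1] m2] m3] Hin; unfold quads in Hin.
      rewrite !in_prod_iff in Hin; unfold S in Hin; rewrite !in_seq in Hin.
      apply c1_term_scaled_squares_le; nia.
  - rewrite (lsum_ext _ _ (fun t => Rpower (INR K) (1 / 2) *
      (let '(a, b, c, d) := t in weight a * weight b * weight c * weight d)))
      by (intros [[[a b] c] d] _; reflexivity).
    rewrite lsum_scal, lsum_quads_mul.
    apply Rmult_le_compat_l; [left; apply exp_pos|].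
    apply pow_incr; split; [apply lsum_nonneg; intros; left; apply exp_pos | apply weight_sum_le].
Qed.

End UniformBound.

Theorem lemma4p2 :
  exists K : R, 0 < K /\ forall z : R, 10 <= z -> Rabs (c1sum z) <= K * 1.
Proof.
  exists (Rpower (INR NumberTheory.divisor_const) (1 / 2) * 5 ^ 4); split.
  - apply Rmult_lt_0_compat; [apply exp_pos | lra].
  - intros z _; rewrite Rmult_1_r, Rabs_right by apply Rle_ge, c1sum_nonneg.
    exact (c1sum_le NumberTheory.divisor_const NumberTheory.ndiv_pow8_le z).
Qed.
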